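(* Let $\mathbb{T}$ be a time scale unbounded from above, $t_0\in\mathbb{T}$, and let $b,c$ be constants with $0\le b<c$. Let $x_0>0$, $y_0>0$, $z_0\ge0$, $N=x_0+y_0+z_0$. Then every solution $(x,y,z)$ of $$x^{\Delta}=-\frac{b\,x\,y^{\sigma}}{x+y},\qquad y^{\Delta}=\frac{b\,x\,y^{\sigma}}{x+y}-c\,y^{\sigma},\qquad z^{\Delta}=c\,y^{\sigma},$$ with $x,y:\mathbb{T}\to(0,\infty)$, $z:\mathbb{T}\to[0,\infty)$, $x(t_0)=x_0$, $y(t_0)=y_0$, $z(t_0)=z_0$, converges as $t\to\infty$ to $(\alpha,0,N-\alpha)$ for some $\alpha\in(0,N)$.
   Context: A time scale $\mathbb{T}$ is a nonempty closed subset of $\mathbb{R}$. $\sigma(t)=\inf\{s\in\mathbb{T}:s>t\}$, $f^{\sigma}=f\circ\sigma$. $f^{\Delta}$ is the delta (Hilger) derivative: for every $\varepsilon>0$ there is $\delta>0$ with $|f(\sigma(t))-f(s)-f^{\Delta}(t)(\sigma(t)-s)|\le\varepsilon|\sigma(t)-s|$ for $s\in(t-\delta,t+\delta)\cap\mathbb{T}$. *)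

From Stdlib Require Import Reals.
From Coquelicot Require Import Coquelicot.
Open Scope R_scope.

Definition time_scale (T : R -> Prop) : Prop :=
  (exists t, T t) /\ closed T.

Definition unbounded_above (T : R -> Prop) : Prop :=
  forall M : R, exists t, T t /\ M < t.

(* Forward jump operator sigma(t) = inf {s in T : s > t}.
   (For T unbounded above the set is nonempty and bounded below by t,
    so the Rbar infimum is finite.) *)
Definition fjump (T : R -> Prop) (t : R) : R :=
  real (Glb_Rbar (fun s => T s /\ t < s)).

Definition delta_derivative (T : R -> Prop) (f : R -> R) (t l : R) : Prop :=
  forall eps : R, 0 < eps ->
    exists delta : R, 0 < delta /\
      forall s : R, T s -> Rabs (s - t) < delta ->
        Rabs (f (fjump T t) - f s - l * (fjump T t - s))
          <= eps * Rabs (fjump T t - s).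

Definition converges_at_infty (T : R -> Prop) (f : R -> R) (l : R) : Prop :=
  forall eps : R, 0 < eps ->
    exists M : R, forall t : R, T t -> M <= t -> Rabs (f t - l) < eps.

(* The right-hand sides of the SIR system add up to 0, so N = x + y + z is constant; x and y
   have nonpositive delta derivatives, so both decrease to limits alpha and L, and z tends to
   N - alpha - L.  If L > 0 then z^Delta = c y^sigma >= c L would push z above N, hence L = 0.
   For alpha > 0: the ratio x / y has delta derivative (c - b) x / y, so it grows at least
   linearly and (c - b) x(t1) > b y(t1) for some t1; and x - b / (c - b) y has the nonnegative
   delta derivative b c y^sigma y / ((c - b) (x + y)), so alpha >= x(t1) - b / (c - b) y(t1) > 0.
   The monotonicity of functions with nonnegative delta derivative comes from the induction
   principle for time scales. *)

From Stdlib Require Import Reals Lra Classical.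
From Coquelicot Require Import Coquelicot.
Open Scope R_scope.

Lemma Rabs_sub3_le a b c : Rabs (a - b - c) <= Rabs a + Rabs b + Rabs c.
Proof.
  unfold Rminus. rewrite <- (Rabs_Ropp b), <- (Rabs_Ropp c).
  eapply Rle_trans; [apply Rabs_triang|]. pose proof (Rabs_triang a (- b)). lra.
Qed.

Lemma is_lub_approx (E : R -> Prop) m d :
  is_lub E m -> 0 < d -> exists r, E r /\ m - d < r <= m.
Proof.
  intros [Hub Hlub] Hd. apply NNPP. intros Hn.
  enough (m <= m - d) by lra.
  apply Hlub. intros r Er. apply Rnot_lt_le. intros Hr.
  apply Hn. exists r. split; [|split]; auto; lra.
Qed.

Lemma within_locally_iff (T : R -> Prop) t (P : R -> Prop) :
  within T (locally t) P <->
  exists d, 0 < d /\ forall s, T s -> Rabs (s - t) < d -> P s.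
Proof.
  split.
  - intros [d Hd]. exists d. split; [apply cond_pos|]. intros s Hs Hst. now apply Hd.
  - intros [d [Hd HP]]. exists (mkposreal d Hd). intros s Hst Hs. now apply HP.
Qed.

Lemma within_locally_Rabs (T : R -> Prop) t r :
  0 < r -> within T (locally t) (fun s => Rabs (s - t) < r).
Proof. intros Hr. apply within_locally_iff. now exists r. Qed.

Section RealFilterlim.

Context {U : Type} {F : (U -> Prop) -> Prop} {FF : Filter F}.

Lemma filterlim_locally_Rabs (f : U -> R) a eps :
  filterlim f F (locally a) -> 0 < eps -> F (fun s => Rabs (f s - a) < eps).
Proof. intros Hf He. exact (proj1 (filterlim_locally f a) Hf (mkposreal eps He)). Qed.

Lemma filterlim_neq0 (g : U -> R) b :
  filterlim g F (locally b) -> b <> 0 -> F (fun s => g s <> 0).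
Proof.
  intros Hg Hb. generalize (filterlim_locally_Rabs g b _ Hg (Rabs_pos_lt _ Hb)).
  apply filter_imp. intros s Hs Hs0. rewrite Hs0, Rminus_0_l, Rabs_Ropp in Hs. lra.
Qed.

Lemma filterlim_div (f g : U -> R) a b :
  filterlim f F (locally a) -> filterlim g F (locally b) -> b <> 0 ->
  filterlim (fun s => f s / g s) F (locally (a / b)).
Proof.
  intros Hf Hg Hb.
  apply (filterlim_comp_2 (H := locally (/ b)) f (fun s => / g s) Rmult Hf).
  - eapply filterlim_comp; [exact Hg|].
    apply (filterlim_Rbar_inv (Finite b)). intros E. apply Hb. now injection E.
  - exact (filterlim_mult (K := R_AbsRing) a (/ b)).
Qed.

End RealFilterlim.

Section ForwardJump.

Variable T : R -> Prop.
Hypothesis hT : time_scale T.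
Hypothesis hunb : unbounded_above T.

Lemma fjump_spec t :
  (forall s, T s -> t < s -> fjump T t <= s) /\
  (forall m, (forall s, T s -> t < s -> m <= s) -> m <= fjump T t).
Proof.
  unfold fjump.
  destruct (Glb_Rbar_correct (fun s => T s /\ t < s)) as [Hlb Hglb].
  destruct (hunb t) as [s0 [Ts0 Hts0]].
  assert (Hge : Rbar_le t (Glb_Rbar (fun s => T s /\ t < s))).
  { apply Hglb. intros u [_ Hu]. simpl. lra. }
  assert (Hle : Rbar_le (Glb_Rbar (fun s => T s /\ t < s)) s0).
  { apply Hlb. now split. }
  destruct (Glb_Rbar (fun s => T s /\ t < s)) as [g| |]; simpl in *; try tauto.
  split.
  - intros s Ts Hts. apply (Hlb s). now split.
  - intros m Hm. apply (Hglb (Finite m)). intros u [Tu Htu]. simpl. auto.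
Qed.

Lemma fjump_le t s : T s -> t < s -> fjump T t <= s.
Proof. apply (proj1 (fjump_spec t)). Qed.

Lemma fjump_glb t m : (forall s, T s -> t < s -> m <= s) -> m <= fjump T t.
Proof. apply (proj2 (fjump_spec t)). Qed.

Lemma le_fjump t : t <= fjump T t.
Proof. apply fjump_glb. intros; lra. Qed.

Lemma fjump_approx t e : 0 < e -> exists s, T s /\ t < s < fjump T t + e.
Proof.
  intros He. apply NNPP. intros Hn.
  enough (fjump T t + e <= fjump T t) by lra.
  apply fjump_glb. intros s Ts Hts. apply Rnot_lt_le. intros Hs.
  apply Hn. eauto.
Qed.

Lemma time_scale_adherent m :
  (forall e, 0 < e -> exists s, T s /\ Rabs (s - m) < e) -> T m.
Proof.
  intros H. apply (proj2 hT). intros [eps Heps].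
  destruct (H eps (cond_pos eps)) as [s [Ts Hsm]].
  now apply (Heps s).
Qed.

Lemma fjump_mem t : T (fjump T t).
Proof.
  apply time_scale_adherent. intros e He.
  destruct (fjump_approx t e He) as [s [Ts Hs]].
  exists s. split; auto. apply Rabs_lt_between'.
  pose proof (fjump_le t s Ts (proj1 Hs)). lra.
Qed.

(* The induction principle for time scales (Bohner-Peterson, Thm 1.7), on [a, b]. *)
Section Induction.

Variable P : R -> Prop.
Variables a b : R.
Hypotheses (Ta : T a) (Tb : T b) (Hab : a <= b) (Pa : P a).
Hypothesis Hscattered :
  forall t, T t -> a <= t < b -> t < fjump T t -> P t -> P (fjump T t).
Hypothesis Hdense :
  forall t, T t -> a <= t < b -> fjump T t = t -> P t ->
  exists d, 0 < d /\ forall s, T s -> t < s < t + d -> P s.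
Hypothesis Hleft :
  forall t, T t -> a < t <= b ->
  (forall d, 0 < d -> exists s, T s /\ t - d < s < t) ->
  (forall s, T s -> a <= s < t -> P s) -> P t.

Let good r := T r /\ a <= r <= b /\ forall s, T s -> a <= s <= r -> P s.

Lemma good_a : good a.
Proof. split; [|split]; auto; [lra|]. intros s _ Hs. now replace s with a by lra. Qed.

Lemma lub_good m : is_lub good m -> good m.
Proof.
  intros Hm.
  assert (Ham : a <= m) by (apply Hm; exact good_a).
  assert (Hmb : m <= b) by (apply Hm; now intros r (_ & Hr & _)).
  assert (Hbelow : forall s, T s -> a <= s < m -> P s).
  { intros s Ts Hs. destruct (is_lub_approx good m (m - s) Hm) as [r [(_ & _ & Hr) Hmr]]; [lra|].
    apply Hr; auto; lra. }
  destruct (classic (good m)) as [|Hnot]; auto.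
  assert (Hlt : forall d, 0 < d -> exists s, T s /\ m - d < s < m).
  { intros d Hd. destruct (is_lub_approx good m d Hm Hd) as [r [Gr Hr]].
    exists r. split; [apply Gr|]. split; [lra|].
    destruct (proj2 Hr) as [|Hrm]; auto. subst r. contradiction. }
  assert (Tm : T m).
  { apply time_scale_adherent. intros e He.
    destruct (Hlt e He) as [s [Ts Hs]]. exists s. split; auto.
    apply Rabs_lt_between'. lra. }
  assert (Pm : P m).
  { destruct Ham as [Ham|<-]; [|exact Pa]. apply Hleft; auto; lra. }
  split; [|split]; auto.
  intros s Ts [Has [Hsm| ->]]; auto.
Qed.

Lemma lub_good_eq m : is_lub good m -> m = b.
Proof.
  intros Hm. destruct (lub_good m Hm) as (Tm & [Ham [Hmb| ->]] & Hgood); auto.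
  exfalso. destruct (le_fjump m) as [Hsc|Hde].
  - assert (Gs : good (fjump T m)).
    { split; [apply fjump_mem|split].
      - pose proof (fjump_le m b Tb Hmb). lra.
      - intros s Ts Hs. destruct (Rle_or_lt s m) as [Hsm|Hsm]; [apply Hgood; auto; lra|].
        replace s with (fjump T m) by (pose proof (fjump_le m s Ts Hsm); lra).
        apply Hscattered; [exact Tm|lra|exact Hsc|apply Hgood; auto; lra]. }
    assert (fjump T m <= m) by now apply Hm. lra.
  - destruct (Hdense m Tm (conj Ham Hmb) (eq_sym Hde)) as [d [Hd Hd']].
    { apply Hgood; auto; lra. }
    destruct (fjump_approx m (Rmin d (b - m))) as [s [Ts Hs]].
    { apply Rmin_pos; lra. }
    rewrite <- Hde in Hs.
    pose proof (Rmin_l d (b - m)). pose proof (Rmin_r d (b - m)).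
    assert (Gs : good s).
    { split; [|split]; auto; [lra|].
      intros s' Ts' Hs'. destruct (Rle_or_lt s' m) as [Hsm|Hsm].
      + apply Hgood; auto; lra.
      + apply Hd'; auto; lra. }
    assert (s <= m) by now apply Hm. lra.
Qed.

Lemma time_scale_induction : P b.
Proof.
  destruct (completeness good) as [m Hm].
  - exists b. now intros r (_ & Hr & _).
  - exists a. exact good_a.
  - destruct (lub_good m Hm) as (_ & Hmb & Hgood).
    apply Hgood; auto. rewrite (lub_good_eq m Hm). lra.
Qed.

End Induction.

End ForwardJump.

Section DeltaCalculus.

Variable T : R -> Prop.

Lemma delta_derivative_near f t l :
  delta_derivative T f t l <->
  forall eps, 0 < eps -> within T (locally t)
    (fun s => Rabs (f (fjump T t) - f s - l * (fjump T t - s)) <= eps * Rabs (fjump T t - s)).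
Proof.
  split; intros H eps He; specialize (H eps He).
  - now apply within_locally_iff.
  - now apply within_locally_iff in H.
Qed.

Lemma delta_derivative_jump f t l : T t -> delta_derivative T f t l ->
  f (fjump T t) - f t = l * (fjump T t - t).
Proof.
  intros Tt Hf.
  enough (Rabs (f (fjump T t) - f t - l * (fjump T t - t)) <= 0)
    as Habs by (apply Rabs_le_between in Habs; lra).
  apply Rle_plus_epsilon. intros eps He.
  set (D := Rabs (fjump T t - t)).
  assert (HD : 0 <= D) by apply Rabs_pos.
  set (e := eps / (D + 1)).
  assert (He' : 0 < e) by (apply Rdiv_lt_0_compat; lra).
  assert (HeD : e * (D + 1) = eps) by (unfold e; field; lra).
  destruct (Hf e He') as [d [Hd Hs]].
  specialize (Hs t Tt). rewrite Rminus_eq_0, Rabs_R0 in Hs.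
  specialize (Hs Hd). fold D in Hs. nra.
Qed.

Lemma delta_derivative_continuous f t l : T t -> delta_derivative T f t l ->
  filterlim f (within T (locally t)) (locally (f t)).
Proof.
  intros Tt Hf. apply filterlim_locally. intros [eps He].
  pose proof (delta_derivative_jump f t l Tt Hf) as Hjump.
  set (D := Rabs (fjump T t - t)).
  assert (HD : 0 <= D) by apply Rabs_pos.
  assert (HL := Rabs_pos l).
  set (e := eps / (4 * (D + 1))).
  assert (He' : 0 < e) by (apply Rdiv_lt_0_compat; lra).
  assert (HeD : e * (D + 1) = eps / 4) by (unfold e; field; lra).
  set (r := eps / (2 * (Rabs l + 1))).
  assert (Hr : 0 < r) by (apply Rdiv_lt_0_compat; lra).
  assert (HrL : r * (2 * (Rabs l + 1)) = eps) by (unfold r; field; lra).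
  generalize (filter_and _ _ (proj1 (delta_derivative_near f t l) Hf e He')
    (filter_and _ _ (within_locally_Rabs T t 1 Rlt_0_1) (within_locally_Rabs T t r Hr))).
  apply filter_imp. intros s [Hrem [Hs1 Hsr]]. change (Rabs (f s - f t) < eps).
  replace (f s - f t) with (- (f (fjump T t) - f s - l * (fjump T t - s)) + l * (s - t))
    by lra.
  assert (Hsig : Rabs (fjump T t - s) <= D + 1).
  { replace (fjump T t - s) with ((fjump T t - t) + (t - s)) by ring.
    eapply Rle_trans; [apply Rabs_triang|]. rewrite (Rabs_minus_sym t). fold D. lra. }
  assert (e * Rabs (fjump T t - s) <= eps / 4)
    by (rewrite <- HeD; apply Rmult_le_compat_l; lra).
  assert (Rabs l * Rabs (s - t) <= Rabs l * r) by (apply Rmult_le_compat_l; lra).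
  eapply Rle_lt_trans; [apply Rabs_triang|]. rewrite Rabs_Ropp, Rabs_mult. nra.
Qed.

Lemma delta_derivative_const k t : delta_derivative T (fun _ => k) t 0.
Proof.
  intros e He. exists 1. split; [lra|]. intros s _ _.
  replace (k - k - 0 * (fjump T t - s)) with 0 by ring.
  rewrite Rabs_R0. apply Rmult_le_pos; [lra|apply Rabs_pos].
Qed.

Lemma delta_derivative_id t : delta_derivative T (fun r => r) t 1.
Proof.
  intros e He. exists 1. split; [lra|]. intros s _ _.
  replace (fjump T t - s - 1 * (fjump T t - s)) with 0 by ring.
  rewrite Rabs_R0. apply Rmult_le_pos; [lra|apply Rabs_pos].
Qed.

Lemma delta_derivative_lin f g t l1 l2 k :
  delta_derivative T f t l1 -> delta_derivative T g t l2 ->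
  delta_derivative T (fun r => f r + k * g r) t (l1 + k * l2).
Proof.
  rewrite !delta_derivative_near. intros Hf Hg e He.
  assert (Hk := Rabs_pos k).
  set (e1 := e / (Rabs k + 1)).
  assert (He1 : 0 < e1) by (apply Rdiv_lt_0_compat; lra).
  assert (He1k : e1 * (Rabs k + 1) = e) by (unfold e1; field; lra).
  generalize (filter_and _ _ (Hf e1 He1) (Hg e1 He1)). apply filter_imp.
  intros s [Hfs Hgs].
  replace (f (fjump T t) + k * g (fjump T t) - (f s + k * g s) - (l1 + k * l2) * (fjump T t - s))
    with ((f (fjump T t) - f s - l1 * (fjump T t - s))
          + k * (g (fjump T t) - g s - l2 * (fjump T t - s))) by ring.
  eapply Rle_trans; [apply Rabs_triang|]. rewrite Rabs_mult.
  assert (Rabs k * Rabs (g (fjump T t) - g s - l2 * (fjump T t - s))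
          <= Rabs k * (e1 * Rabs (fjump T t - s))) by (apply Rmult_le_compat_l; auto).
  nra.
Qed.

Lemma delta_derivative_div f g t l1 l2 : T t ->
  delta_derivative T f t l1 -> delta_derivative T g t l2 ->
  g t <> 0 -> g (fjump T t) <> 0 ->
  delta_derivative T (fun r => f r / g r) t
    ((l1 * g t - f t * l2) / (g t * g (fjump T t))).
Proof.
  intros Tt Hf Hg Hgt Hgs.
  assert (Hgc := delta_derivative_continuous g t l2 Tt Hg).
  assert (Hq := filterlim_div f g _ _ (delta_derivative_continuous f t l1 Tt Hf) Hgc Hgt).
  assert (Hg0 := filterlim_neq0 g _ Hgc Hgt).
  rewrite delta_derivative_near in Hf, Hg |- *. intros e He.
  set (sg := fjump T t) in *.
  set (Gs := Rabs (g sg)). assert (HGs : 0 < Gs) by now apply Rabs_pos_lt.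
  set (Q := Rabs (f t / g t)). assert (HQ : 0 <= Q) by apply Rabs_pos.
  assert (HL := Rabs_pos l2).
  set (e1 := e * Gs / (2 * (Q + 2))).
  assert (He1 : 0 < e1) by (apply Rdiv_lt_0_compat; nra).
  assert (He1Q : e1 * (Q + 2) = e * Gs / 2) by (unfold e1; field; lra).
  set (e2 := e * Gs / (2 * (Rabs l2 + 1))).
  assert (He2 : 0 < e2) by (apply Rdiv_lt_0_compat; nra).
  assert (He2L : e2 * (Rabs l2 + 1) = e * Gs / 2) by (unfold e2; field; lra).
  generalize (filter_and _ _ (filter_and _ _ (Hf e1 He1) (Hg e1 He1))
    (filter_and _ _ (filter_and _ _ (filterlim_locally_Rabs _ _ _ Hq Rlt_0_1)
       (filterlim_locally_Rabs _ _ _ Hq He2)) Hg0)).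
  apply filter_imp. intros s [[Hfs Hgs'] [[Hq1 Hq2] Hs0]].
  set (d := sg - s) in *.
  set (q := f s / g s - f t / g t) in *.
  (* The remainder of f / g in terms of those of f and g; the last term is small because
     f / g is continuous at t. *)
  replace (f sg / g sg - f s / g s - (l1 * g t - f t * l2) / (g t * g sg) * d)
    with (((f sg - f s - l1 * d) - f s / g s * (g sg - g s - l2 * d) - l2 * d * q) / g sg)
    by (unfold q; field; auto).
  rewrite Rabs_div by auto. fold Gs. apply Rle_div_l; [lra|].
  eapply Rle_trans; [apply Rabs_sub3_le|]. rewrite !Rabs_mult.
  assert (Hfgs : Rabs (f s / g s) <= Q + 1).
  { unfold Q. replace (f s / g s) with (q + f t / g t) by (unfold q; ring).
    pose proof (Rabs_triang q (f t / g t)). lra. }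
  assert (Hd := Rabs_pos d).
  assert (Rabs (f s / g s) * Rabs (g sg - g s - l2 * d) <= (Q + 1) * (e1 * Rabs d))
    by (apply Rmult_le_compat; auto; apply Rabs_pos).
  assert (Rabs l2 * Rabs q <= e * Gs / 2) by (rewrite <- He2L; nra).
  nra.
Qed.

End DeltaCalculus.

Section Monotonicity.

Variable T : R -> Prop.
Hypothesis hT : time_scale T.
Hypothesis hunb : unbounded_above T.

Lemma delta_derivative_nonneg_le f a b : T a -> T b -> a <= b ->
  (forall t, T t -> a <= t <= b -> exists l, 0 <= l /\ delta_derivative T f t l) ->
  f a <= f b.
Proof.
  intros Ta Tb Hab Hd.
  apply Rle_plus_epsilon. intros eps He.
  set (k := eps / (b - a + 1)).
  assert (Hk : 0 < k) by (apply Rdiv_lt_0_compat; lra).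
  assert (Hkb : k * (b - a + 1) = eps) by (unfold k; field; lra).
  enough (f a <= f b + k * (b - a)) by nra.
  (* The slack k (t - a) is what makes the right-dense step work when the derivative is 0. *)
  apply (time_scale_induction T hT hunb (fun t => f a <= f t + k * (t - a)) a b); auto.
  - lra.
  - intros t Tt Ht Hsc IH. destruct (Hd t Tt ltac:(lra)) as [l [Hl Hdl]].
    pose proof (delta_derivative_jump T f t l Tt Hdl). nra.
  - intros t Tt Ht Hde IH. destruct (Hd t Tt ltac:(lra)) as [l [Hl Hdl]].
    destruct (Hdl k Hk) as [d [Hd' Hs]]. exists d. split; auto.
    intros s Ts Hts. specialize (Hs s Ts ltac:(apply Rabs_lt_between'; lra)).
    rewrite Hde, (Rabs_left (t - s)) in Hs by lra. apply Rabs_le_between in Hs. nra.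
  - intros t Tt Ht Hleft IH. destruct (Hd t Tt ltac:(lra)) as [l [_ Hdl]].
    apply Rle_plus_epsilon. intros eta Heta.
    destruct (proj1 (within_locally_iff T t _) (filterlim_locally_Rabs f _ eta
      (delta_derivative_continuous T f t l Tt Hdl) Heta)) as [d [Hd' Hs]].
    destruct (Hleft (Rmin d (t - a))) as [s [Ts Hs']].
    { apply Rmin_pos; lra. }
    pose proof (Rmin_l d (t - a)). pose proof (Rmin_r d (t - a)).
    specialize (IH s Ts ltac:(lra)).
    specialize (Hs s Ts ltac:(apply Rabs_lt_between'; lra)). apply Rabs_lt_between in Hs.
    nra.
Qed.

Lemma delta_derivative_ge_affine_le f k a b : T a -> T b -> a <= b ->
  (forall t, T t -> a <= t <= b -> exists l, k <= l /\ delta_derivative T f t l) ->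
  f a + k * (b - a) <= f b.
Proof.
  intros Ta Tb Hab Hd.
  enough (f a + - k * a <= f b + - k * b) by lra.
  apply (delta_derivative_nonneg_le (fun r => f r + - k * r) a b); auto.
  intros t Tt Ht. destruct (Hd t Tt Ht) as [l [Hl Hdl]].
  exists (l + - k * 1). split; [lra|].
  apply delta_derivative_lin; [exact Hdl|apply delta_derivative_id].
Qed.

Lemma delta_derivative_nonpos_ge f a b : T a -> T b -> a <= b ->
  (forall t, T t -> a <= t <= b -> exists l, l <= 0 /\ delta_derivative T f t l) ->
  f b <= f a.
Proof.
  intros Ta Tb Hab Hd.
  enough (0 + -1 * f a <= 0 + -1 * f b) by lra.
  apply (delta_derivative_nonneg_le (fun r => 0 + -1 * f r) a b); auto.
  intros t Tt Ht. destruct (Hd t Tt Ht) as [l [Hl Hdl]].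
  exists (0 + -1 * l). split; [lra|].
  apply (delta_derivative_lin T (fun _ => 0)); [apply delta_derivative_const|exact Hdl].
Qed.

Lemma delta_derivative_zero_eq f a b : T a -> T b -> a <= b ->
  (forall t, T t -> a <= t <= b -> delta_derivative T f t 0) -> f b = f a.
Proof.
  intros Ta Tb Hab Hd. apply Rle_antisym.
  - apply delta_derivative_nonpos_ge; auto. intros t Tt Ht. exists 0. split; auto; lra.
  - apply delta_derivative_nonneg_le; auto. intros t Tt Ht. exists 0. split; auto; lra.
Qed.

End Monotonicity.

Section Convergence.

Variable T : R -> Prop.

Lemma converges_at_infty_ext f g l a :
  (forall t, T t -> a <= t -> f t = g t) ->
  converges_at_infty T f l -> converges_at_infty T g l.
Proof.
  intros Hfg Hf eps He. destruct (Hf eps He) as [M HM].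
  exists (Rmax a M). intros t Tt Ht.
  rewrite <- Hfg; [apply HM| |]; auto.
  - eapply Rle_trans; [apply Rmax_r|exact Ht].
  - eapply Rle_trans; [apply Rmax_l|exact Ht].
Qed.

Lemma converges_at_infty_const k : converges_at_infty T (fun _ => k) k.
Proof. intros eps He. exists 0. intros. rewrite Rminus_eq_0, Rabs_R0. exact He. Qed.

Lemma converges_at_infty_lin f g lf lg k :
  converges_at_infty T f lf -> converges_at_infty T g lg ->
  converges_at_infty T (fun t => f t + k * g t) (lf + k * lg).
Proof.
  intros Hf Hg eps He.
  assert (Hk := Rabs_pos k).
  set (e := eps / (2 * (Rabs k + 1))).
  assert (He' : 0 < e) by (apply Rdiv_lt_0_compat; lra).
  assert (Hek : e * (2 * (Rabs k + 1)) = eps) by (unfold e; field; lra).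
  destruct (Hf e He') as [M1 H1]. destruct (Hg e He') as [M2 H2].
  exists (Rmax M1 M2). intros t Tt Ht.
  specialize (H1 t Tt (Rle_trans _ _ _ (Rmax_l M1 M2) Ht)).
  specialize (H2 t Tt (Rle_trans _ _ _ (Rmax_r M1 M2) Ht)).
  replace (f t + k * g t - (lf + k * lg)) with ((f t - lf) + k * (g t - lg)) by ring.
  eapply Rle_lt_trans; [apply Rabs_triang|]. rewrite Rabs_mult.
  assert (Rabs k * Rabs (g t - lg) <= Rabs k * e) by (apply Rmult_le_compat_l; lra).
  nra.
Qed.

Lemma converges_at_infty_lower_bound f l m a : unbounded_above T ->
  (forall t, T t -> a <= t -> m <= f t) -> converges_at_infty T f l -> m <= l.
Proof.
  intros hunb Hm Hf. apply Rle_plus_epsilon. intros eps He.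
  destruct (Hf eps He) as [M HM].
  destruct (hunb (Rmax a M)) as [t [Tt Ht]].
  specialize (Hm t Tt (Rle_trans _ _ _ (Rmax_l a M) (Rlt_le _ _ Ht))).
  specialize (HM t Tt (Rle_trans _ _ _ (Rmax_r a M) (Rlt_le _ _ Ht))).
  apply Rabs_lt_between' in HM. lra.
Qed.

Lemma nonincreasing_converges f a m : T a ->
  (forall t s, T t -> T s -> a <= t <= s -> f s <= f t) ->
  (forall t, T t -> a <= t -> m <= f t) ->
  exists l, (forall t, T t -> a <= t -> l <= f t) /\ converges_at_infty T f l.
Proof.
  intros Ta Hdec Hm.
  set (E := fun r => exists t, T t /\ a <= t /\ r = - f t).
  destruct (completeness E) as [u Hu].
  - exists (- m). intros r (t & Tt & Ht & ->). specialize (Hm t Tt Ht). lra.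
  - exists (- f a). exists a. split; [|split]; auto; lra.
  - assert (Hlow : forall t, T t -> a <= t -> - u <= f t).
    { intros t Tt Ht. enough (- f t <= u) by lra. apply Hu. now exists t. }
    exists (- u). split; auto.
    intros eps He. destruct (is_lub_approx E u eps Hu He) as [r [(t1 & Tt1 & Ht1 & ->) Hr]].
    exists t1. intros t Tt Ht. apply Rabs_lt_between'.
    pose proof (Hlow t Tt ltac:(lra)). pose proof (Hdec t1 t Tt1 Tt ltac:(lra)). lra.
Qed.

End Convergence.

Section SIR.

Variable T : R -> Prop.
Hypothesis hT : time_scale T.
Hypothesis hunb : unbounded_above T.
Variables t0 b c : R.
Hypothesis ht0 : T t0.
Hypothesis hb : 0 <= b.
Hypothesis hbc : b < c.
Variables x y z : R -> R.
Hypothesis hpos : forall t, T t -> t0 <= t -> 0 < x t /\ 0 < y t /\ 0 <= z t.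
Hypothesis hx : forall t, T t -> t0 <= t ->
  delta_derivative T x t (- (b * x t * y (fjump T t)) / (x t + y t)).
Hypothesis hy : forall t, T t -> t0 <= t ->
  delta_derivative T y t ((b * x t * y (fjump T t)) / (x t + y t) - c * y (fjump T t)).
Hypothesis hz : forall t, T t -> t0 <= t ->
  delta_derivative T z t (c * y (fjump T t)).

Lemma sir_fjump t : T t -> t0 <= t -> T (fjump T t) /\ t0 <= fjump T t.
Proof.
  intros Tt Ht. split; [now apply fjump_mem|].
  pose proof (le_fjump T hunb t). lra.
Qed.

Lemma sir_y_fjump_pos t : T t -> t0 <= t -> 0 < y (fjump T t).
Proof. intros Tt Ht. destruct (sir_fjump t Tt Ht). now apply hpos. Qed.

Lemma sir_x_nonincreasing t s : T t -> T s -> t0 <= t <= s -> x s <= x t.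
Proof.
  intros Tt Ts Hts. apply (delta_derivative_nonpos_ge T hT hunb x t s); auto; [lra|].
  intros r Tr Hr. exists (- (b * x r * y (fjump T r)) / (x r + y r)).
  split; [|apply hx; auto; lra].
  destruct (hpos r Tr ltac:(lra)) as (Hxr & Hyr & _).
  pose proof (sir_y_fjump_pos r Tr ltac:(lra)).
  assert (0 <= b * x r * y (fjump T r)) by (repeat apply Rmult_le_pos; lra).
  apply Rle_div_l; lra.
Qed.

Lemma sir_y_nonincreasing t s : T t -> T s -> t0 <= t <= s -> y s <= y t.
Proof.
  intros Tt Ts Hts. apply (delta_derivative_nonpos_ge T hT hunb y t s); auto; [lra|].
  intros r Tr Hr. exists (b * x r * y (fjump T r) / (x r + y r) - c * y (fjump T r)).
  split; [|apply hy; auto; lra].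
  destruct (hpos r Tr ltac:(lra)) as (Hxr & Hyr & _).
  pose proof (sir_y_fjump_pos r Tr ltac:(lra)).
  enough (b * x r * y (fjump T r) / (x r + y r) <= c * y (fjump T r)) by lra.
  assert (0 <= (c - b) * y (fjump T r) * (x r + y r)) by (repeat apply Rmult_le_pos; lra).
  assert (0 <= b * y (fjump T r) * y r) by (repeat apply Rmult_le_pos; lra).
  apply Rle_div_l; lra.
Qed.

Lemma sir_conservation t : T t -> t0 <= t -> x t + y t + z t = x t0 + y t0 + z t0.
Proof.
  intros Tt Ht.
  pose proof (delta_derivative_zero_eq T hT hunb (fun r => x r + 1 * (y r + 1 * z r)) t0 t
    ht0 Tt Ht) as Hconst.
  cbv beta in Hconst. rewrite !Rmult_1_l, <- !Rplus_assoc in Hconst. apply Hconst.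
  intros r Tr Hr. destruct (hpos r Tr ltac:(lra)) as (Hxr & Hyr & _).
  replace 0 with (- (b * x r * y (fjump T r)) / (x r + y r)
    + 1 * ((b * x r * y (fjump T r) / (x r + y r) - c * y (fjump T r))
    + 1 * (c * y (fjump T r)))) by (field; lra).
  apply delta_derivative_lin; [apply hx; auto; lra|].
  apply delta_derivative_lin; [apply hy|apply hz]; auto; lra.
Qed.

Lemma sir_y_limit : converges_at_infty T y 0.
Proof.
  destruct (nonincreasing_converges T y t0 0 ht0 sir_y_nonincreasing) as [L [HL HyL]].
  { intros t Tt Ht. apply Rlt_le, hpos; auto. }
  enough (L = 0) by now subst L.
  assert (HL0 : 0 <= L).
  { apply (converges_at_infty_lower_bound T y L 0 t0 hunb); auto.
    intros t Tt Ht. apply Rlt_le, hpos; auto. }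
  destruct HL0 as [HL0|]; auto. exfalso.
  set (N := x t0 + y t0 + z t0).
  destruct (hpos t0 ht0 (Rle_refl _)) as (Hx0 & Hy0 & Hz0).
  assert (HcL : 0 < c * L) by nra.
  destruct (hunb (t0 + N / (c * L))) as [t [Tt Ht]].
  assert (HNt : N < (t - t0) * (c * L)).
  { apply Rlt_div_l; auto. lra. }
  assert (HN : 0 <= N / (c * L)) by (apply Rdiv_le_0_compat; unfold N; lra).
  assert (Hgrowth : z t0 + c * L * (t - t0) <= z t).
  { apply (delta_derivative_ge_affine_le T hT hunb z (c * L) t0 t); auto; [lra|].
    intros r Tr Hr. exists (c * y (fjump T r)). split; [|apply hz; auto; lra].
    destruct (sir_fjump r Tr ltac:(lra)) as [Tsr Hsr].
    pose proof (HL _ Tsr Hsr). nra. }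
  pose proof (sir_conservation t Tt ltac:(lra)) as Hcons.
  destruct (hpos t Tt ltac:(lra)) as (Hxt & Hyt & _).
  fold N in Hcons. nra.
Qed.

Lemma sir_ratio_derivative t : T t -> t0 <= t ->
  delta_derivative T (fun r => x r / y r) t ((c - b) * (x t / y t)).
Proof.
  intros Tt Ht. destruct (hpos t Tt Ht) as (Hxt & Hyt & _).
  pose proof (sir_y_fjump_pos t Tt Ht).
  replace ((c - b) * (x t / y t)) with
    (((- (b * x t * y (fjump T t)) / (x t + y t)) * y t
      - x t * (b * x t * y (fjump T t) / (x t + y t) - c * y (fjump T t)))
     / (y t * y (fjump T t))) by (field; lra).
  apply delta_derivative_div; auto; lra.
Qed.

Lemma sir_ratio_ge_initial t : T t -> t0 <= t -> x t0 / y t0 <= x t / y t.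
Proof.
  intros Tt Ht. apply (delta_derivative_nonneg_le T hT hunb (fun r => x r / y r) t0 t); auto.
  intros r Tr Hr. exists ((c - b) * (x r / y r)).
  split; [|now apply sir_ratio_derivative].
  destruct (hpos r Tr ltac:(lra)) as (Hxr & Hyr & _).
  apply Rmult_le_pos; [lra|]. apply Rlt_le, Rdiv_lt_0_compat; auto.
Qed.

Lemma sir_ratio_unbounded : exists t, T t /\ t0 <= t /\ b * y t < (c - b) * x t.
Proof.
  destruct (hpos t0 ht0 (Rle_refl _)) as (Hx0 & Hy0 & _).
  set (v0 := x t0 / y t0).
  assert (Hv0 : 0 < v0) by now apply Rdiv_lt_0_compat.
  set (k := (c - b) * v0).
  assert (Hk : 0 < (c - b) * k)
    by (unfold k; apply Rmult_lt_0_compat; [|apply Rmult_lt_0_compat]; lra).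
  destruct (hunb (t0 + b / ((c - b) * k))) as [t [Tt Ht]].
  assert (Hbk : 0 <= b / ((c - b) * k)) by (apply Rdiv_le_0_compat; lra).
  assert (Hbt : b < (t - t0) * ((c - b) * k)) by (apply Rlt_div_l; lra).
  assert (Hv : v0 + k * (t - t0) <= x t / y t).
  { apply (delta_derivative_ge_affine_le T hT hunb (fun r => x r / y r) k t0 t); auto; [lra|].
    intros r Tr Hr. exists ((c - b) * (x r / y r)).
    split; [|apply sir_ratio_derivative; auto; lra].
    apply Rmult_le_compat_l; [lra|]. apply sir_ratio_ge_initial; auto; lra. }
  exists t. split; [|split]; [auto|lra|].
  destruct (hpos t Tt ltac:(lra)) as (Hxt & Hyt & _).
  assert (Hmul : (c - b) * (v0 + k * (t - t0)) <= (c - b) * (x t / y t))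
    by (apply Rmult_le_compat_l; lra).
  assert (Hgt : 0 < ((c - b) * (x t / y t) - b) * y t)
    by (apply Rmult_lt_0_compat; [unfold k in *; nra|lra]).
  replace (x t) with (x t / y t * y t) by (field; lra). nra.
Qed.

Lemma sir_weighted_nondecreasing t s : T t -> T s -> t0 <= t <= s ->
  x t - b / (c - b) * y t <= x s - b / (c - b) * y s.
Proof.
  intros Tt Ts Hts.
  enough (x t + - (b / (c - b)) * y t <= x s + - (b / (c - b)) * y s) by lra.
  apply (delta_derivative_nonneg_le T hT hunb (fun r => x r + - (b / (c - b)) * y r) t s);
    auto; [lra|].
  intros r Tr Hr. destruct (hpos r Tr ltac:(lra)) as (Hxr & Hyr & _).
  pose proof (sir_y_fjump_pos r Tr ltac:(lra)).
  eexists. split; [|apply delta_derivative_lin; [apply hx|apply hy]; auto; lra].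
  replace (- (b * x r * y (fjump T r)) / (x r + y r)
      + - (b / (c - b)) * (b * x r * y (fjump T r) / (x r + y r) - c * y (fjump T r)))
    with (b * c * y (fjump T r) * y r / ((c - b) * (x r + y r))) by (field; lra).
  apply Rdiv_le_0_compat; [|nra].
  repeat apply Rmult_le_pos; lra.
Qed.

Lemma sir_x_limit_pos alpha : converges_at_infty T x alpha -> 0 < alpha.
Proof.
  intros Hx. destruct sir_ratio_unbounded as (t1 & Tt1 & Ht1 & Hratio).
  destruct (hpos t1 Tt1 Ht1) as (_ & Hyt1 & _).
  assert (Hw : 0 < x t1 - b / (c - b) * y t1).
  { enough (b * y t1 / (c - b) < x t1)
      by (replace (b / (c - b) * y t1) with (b * y t1 / (c - b)) by (field; lra); lra).
    apply Rlt_div_l; lra. }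
  enough (x t1 - b / (c - b) * y t1 <= alpha) by lra.
  apply (converges_at_infty_lower_bound T x alpha _ t1 hunb); auto.
  intros s Ts Hs. destruct (hpos s Ts ltac:(lra)) as (_ & Hys & _).
  pose proof (sir_weighted_nondecreasing t1 s Tt1 Ts ltac:(lra)).
  assert (0 <= b / (c - b) * y s) by (apply Rmult_le_pos; [apply Rdiv_le_0_compat|]; lra).
  lra.
Qed.

Lemma sir_limits : exists alpha,
  0 < alpha < x t0 + y t0 + z t0 /\
  converges_at_infty T x alpha /\
  converges_at_infty T y 0 /\
  converges_at_infty T z (x t0 + y t0 + z t0 - alpha).
Proof.
  set (N := x t0 + y t0 + z t0).
  destruct (nonincreasing_converges T x t0 0 ht0 sir_x_nonincreasing) as [alpha [Hle Hx]].
  { intros t Tt Ht. apply Rlt_le, hpos; auto. }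
  exists alpha.
  pose proof (Hle t0 ht0 (Rle_refl _)) as Halpha.
  destruct (hpos t0 ht0 (Rle_refl _)) as (_ & Hy0 & Hz0).
  split; [split|split; [|split]]; auto.
  - exact (sir_x_limit_pos alpha Hx).
  - unfold N. lra.
  - exact sir_y_limit.
  - apply (converges_at_infty_ext T (fun t => N + -1 * x t + -1 * y t) _ _ t0).
    { intros t Tt Ht. pose proof (sir_conservation t Tt Ht) as Hcons. fold N in Hcons. lra. }
    replace (N - alpha) with (N + -1 * alpha + -1 * 0) by ring.
    apply (converges_at_infty_lin T (fun t => N + -1 * x t) y).
    + apply (converges_at_infty_lin T (fun _ => N) x); auto. apply converges_at_infty_const.
    + exact sir_y_limit.
Qed.

End SIR.

Theorem corollary27
  (T : R -> Prop) (hT : time_scale T) (hunb : unbounded_above T)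
  (t0 : R) (ht0 : T t0)
  (b c : R) (hb : 0 <= b) (hbc : b < c)
  (x0 y0 z0 : R) (hx0 : 0 < x0) (hy0 : 0 < y0) (hz0 : 0 <= z0)
  (x y z : R -> R)
  (hpos : forall t, T t -> t0 <= t -> 0 < x t /\ 0 < y t /\ 0 <= z t)
  (hxi : x t0 = x0) (hyi : y t0 = y0) (hzi : z t0 = z0)
  (hx : forall t, T t -> t0 <= t ->
     delta_derivative T x t (- (b * x t * y (fjump T t)) / (x t + y t)))
  (hy : forall t, T t -> t0 <= t ->
     delta_derivative T y t
       ((b * x t * y (fjump T t)) / (x t + y t) - c * y (fjump T t)))
  (hz : forall t, T t -> t0 <= t ->
     delta_derivative T z t (c * y (fjump T t))) :
  exists alpha : R,
    0 < alpha < x0 + y0 + z0 /\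
    converges_at_infty T x alpha /\
    converges_at_infty T y 0 /\
    converges_at_infty T z (x0 + y0 + z0 - alpha).
Proof.
  subst x0 y0 z0.
  exact (sir_limits T hT hunb t0 b c ht0 hb hbc x y z hpos hx hy hz).
Qed.
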